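(* Let $T$ be a tree and $v\in V(T)$. Root $T$ at $v$ and let $\bar T_v$ be a pruning of this rooted tree. Then (a) $v\in\mathcal{A}(T)$ if and only if $|C^2_{\bar T_v}(v)|=0$ and $|C^1_{\bar T_v}(v)|\le 1$; (b) $v\in\mathcal{N}(T)$ if and only if $|C^2_{\bar T_v}(v)|=2$ or $|C^1_{\bar T_v}(v)|+|C^2_{\bar T_v}(v)|\ge 3$.
   Context: All graphs are finite, simple and undirected. A dissociation set of a graph $G$ is a set $F\subseteq V(G)$ such that $G[F]$ has maximum degree at most $1$; a maximum dissociation set is one of maximum cardinality. $\mathcal{A}(G)$ is the set of vertices contained in every maximum dissociation set of $G$; $\mathcal{N}(G)$ is the set of vertices contained in no maximum dissociation set of $G$. In a rooted tree, for a vertex $u$, $C(u)$ is the set of children of $u$, $D[u]$ is the set consisting of $u$ and all its descendants, and $T_u$ is the subtree induced by $D[u]$. A branch vertex is a vertex of degree at least $3$. Pruning: let $T$ be rooted at $v$. While the current tree has a branch vertex different from $v$, choose such a branch vertex $u\ne v$ at maximum distance from $v$; then every proper descendant of $u$ has degree at most $2$, so for each child $w$ of $u$ the subtree $T_w$ is a path with end vertex $w$, and for $i\in\{0,1,2\}$ let $C^i(u)$ be the set of children $w$ of $u$ with $|V(T_w)|\equiv i \pmod 3$. If $|C^2(u)|\ge 1$ or $|C^1(u)|\ge 2$, delete all vertices of $D[u]$; if $|C^2(u)|=0$ and $|C^1(u)|\le 1$, delete all vertices of $D[w]$ for every $w\in C(u)\setminus\{z\}$, where $z$ is the unique vertex of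 $C^1(u)$ if $|C^1(u)|=1$ and an arbitrary child of $u$ otherwise. When no branch vertex other than $v$ remains, the resulting tree is called a pruning of $T$. In the pruning $\bar T_v$, every vertex other than $v$ has degree at most $2$, so for each child $w$ of $v$ in $\bar T_v$ the subtree of $\bar T_v$ induced by $w$ and its descendants is a path with end vertex $w$; for $i\in\{0,1,2\}$, $C^i_{\bar T_v}(v)$ is the set of children $w$ of $v$ in $\bar T_v$ for which this path has a number of vertices congruent to $i$ modulo $3$. *)

From mathcomp Require Import all_boot.
Set Implicit Arguments. Unset Strict Implicit. Unset Printing Implicit Defensive.

Section Defs.
Variables (T : finType) (adj : rel T).

Definition simple_graph : Prop := symmetric adj /\ irreflexive adj.

Definition has_cycle : Prop :=
  exists c : seq T, [/\ 3 <= size c, uniq c & cycle adj c].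

Definition is_tree : Prop :=
  [/\ 0 < #|T|, (forall x y, connect adj x y) & ~ has_cycle].

Definition dissociation (F : {set T}) : bool :=
  [forall x in F, #|[set y in F | adj x y]| <= 1].

Definition max_dissociation (F : {set T}) : Prop :=
  dissociation F /\ forall F' : {set T}, dissociation F' -> #|F'| <= #|F|.

(** A(G): vertices in every maximum dissociation set; N(G): in none *)
Definition in_all_max (x : T) : Prop :=
  forall F, max_dissociation F -> x \in F.
Definition in_no_max (x : T) : Prop :=
  forall F, max_dissociation F -> x \notin F.

(** Current tree = subgraph induced by the vertex set S. *)
Definition radj (S : {set T}) : rel T :=
  [rel x y | [&& x \in S, y \in S & adj x y]].

Definition deg (S : {set T}) (u : T) : nat := #|[set y in S | adj u y]|.

Definition is_dist (S : {set T}) (x y : T) (n : nat) : Prop :=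
  (exists p : seq T, [/\ path (radj S) x p, last x p = y & size p = n]) /\
  (forall p : seq T, path (radj S) x p -> last x p = y -> n <= size p).

Variable v : T.

(** D[u] in the current tree S rooted at v: u and all its descendants *)
Definition desc (S : {set T}) (u : T) : {set T} :=
  if u == v then S
  else [set x in S | ~~ connect (radj (S :\ u)) v x].

Definition children (S : {set T}) (u : T) : {set T} :=
  [set w in desc S u | adj u w].

(** C^i(u): children w with |V(T_w)| = i mod 3 *)
Definition childrenmod (S : {set T}) (u : T) (i : nat) : {set T} :=
  [set w in children S u | #|desc S w| %% 3 == i].

Definition branch (S : {set T}) (u : T) : bool := (u \in S) && (3 <= deg S u).

Definition prune_step (S S' : {set T}) : Prop :=
  exists u, [/\ branch S u, u != v,
    (forall u' n n', branch S u' -> u' != v -> is_dist S v u n ->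
        is_dist S v u' n' -> n' <= n) &
    (if (1 <= #|childrenmod S u 2|) || (2 <= #|childrenmod S u 1|)
     then S' = S :\: desc S u
     else exists2 z, z \in children S u &
            [/\ #|childrenmod S u 1| = 1 -> z \in childrenmod S u 1 &
                S' = S :\: \bigcup_(w in children S u :\ z) desc S w])].

Inductive prune_reach (S : {set T}) : {set T} -> Prop :=
  | prune_refl : prune_reach S S
  | prune_more S1 S2 : prune_reach S S1 -> prune_step S1 S2 -> prune_reach S S2.

Definition is_pruning (Sbar : {set T}) : Prop :=
  prune_reach [set: T] Sbar /\
  (forall u, u \in Sbar -> u != v -> ~~ branch Sbar u).

End Defs.

From mathcomp Require Import all_boot zify.
Set Implicit Arguments. Unset Strict Implicit. Unset Printing Implicit Defensive.

(* Write in(S) and out(S) (dnum_in, dnum_out) for the largest size of a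
   dissociation set inside the vertex set S containing, resp. avoiding, v.
   Then v lies in every maximum dissociation set iff out(T) < in(T), and in
   none iff in(T) < out(T) (all_max_iff, no_max_iff), so only the difference
   in - out matters; same_gap S S' says that it is the same for S and S'.
   The key tool is the removal lemma dnum_removal: if Z is attached to the
   rest of S through a single vertex z, and some maximum dissociation set of
   G[Z] avoids z, then deleting Z lowers in and out by the same amount.

   A path of 3k
   vertices hanging from its top is removable (hanging_path_avoidable), hence
   every pruning step preserves the gap (prune_step_gap), and so does cutting
   each leg below v to its length mod 3 (reduce_legs_gap).  This turns the
   pruning into a spider at v whose legs of one and two vertices correspond to
   the children in C^1 and C^2 (pruning_spider), and for a spider in and out
   are computed explicitly (spider_dnum_in, spider_dnum_out); the theorem then
   reduces to arithmetic. *)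

Lemma cardsU_disjoint (T : finType) (A B : {set T}) :
  [disjoint A & B] -> #|A :|: B| = #|A| + #|B|.
Proof. by move=> AB; apply/eqP; rewrite (leq_card_setU A B).2. Qed.

Section Dissociation.
Variables (T : finType) (adj : rel T).
Hypothesis adj_sym : symmetric adj.
Implicit Types (S F G Z A : {set T}) (P : pred {set T}) (x y z w : T).

Definition dnum S P :=
  \max_(F : {set T} | (F \subset S) && dissociation adj F && P F) #|F|.

Definition dnum_all S := dnum S xpredT.

Definition avoidable Z z := dnum_all Z <= dnum Z (fun F => z \notin F).

Definition attached S Z z :=
  forall x y, x \in Z -> x != z -> y \in S -> adj x y -> y \in Z.

Lemma attached_sub S S' Z z : S' \subset S -> attached S Z z -> attached S' Z z.
Proof. by move=> /subsetP sub attZ x y xZ xz /sub; apply: attZ. Qed.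

Lemma dnum_ge S P F : F \subset S -> dissociation adj F -> P F -> #|F| <= dnum S P.
Proof. by move=> sFS dF PF; apply: (leq_bigmax_cond F); rewrite sFS dF PF. Qed.

Lemma dnum_le S P n :
  (forall F, F \subset S -> dissociation adj F -> P F -> #|F| <= n) -> dnum S P <= n.
Proof. by move=> bound; apply/bigmax_leqP => F /andP[/andP[sFS dF] PF]; apply: bound. Qed.

Lemma dnum_witness S P G : G \subset S -> dissociation adj G -> P G ->
  exists F, [/\ F \subset S, dissociation adj F, P F & #|F| = dnum S P].
Proof.
move=> sGS dG PG.
have admissible : (G \subset S) && dissociation adj G && P G by rewrite sGS dG PG.
rewrite /dnum (bigmax_eq_arg G admissible).
by case: arg_maxnP => // F /andP[/andP[sFS dF] PF] _; exists F.
Qed.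

Lemma dissP F :
  reflect (forall x, x \in F -> #|[set y in F | adj x y]| <= 1) (dissociation adj F).
Proof. exact: (iffP forall_inP). Qed.

Lemma diss_sub F G : F \subset G -> dissociation adj G -> dissociation adj F.
Proof.
move=> /subsetP sFG /dissP dG; apply/dissP => x xF.
apply: leq_trans (dG x (sFG _ xF)); apply: subset_leq_card.
by apply/subsetP => y; rewrite !inE => /andP[/sFG -> ->].
Qed.

Lemma diss_union F G : dissociation adj F -> dissociation adj G ->
  (forall x y, x \in F -> y \in G -> ~~ adj x y) -> dissociation adj (F :|: G).
Proof.
move=> /dissP dF /dissP dG no_edge; apply/dissP => x; rewrite inE => /orP[xF|xG].
  have -> : [set y in F :|: G | adj x y] = [set y in F | adj x y]; last exact: dF.
  apply/setP => y; rewrite !inE; case: (boolP (y \in G)) => yG; last by rewrite orbF.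
  by rewrite (negbTE (no_edge _ _ xF yG)) !andbF.
have -> : [set y in F :|: G | adj x y] = [set y in G | adj x y]; last exact: dG.
apply/setP => y; rewrite !inE; case: (boolP (y \in F)) => yF //=.
by rewrite adj_sym (negbTE (no_edge _ _ yF xG)) andbF.
Qed.

Lemma diss0 : dissociation adj set0.
Proof. by apply/dissP => x; rewrite inE. Qed.

Lemma diss1 x : dissociation adj [set x].
Proof.
apply/dissP => y; rewrite inE => /eqP ->; rewrite -(cards1 x).
by apply: subset_leq_card; apply/subsetP => z; rewrite !inE => /andP[].
Qed.

Lemma not_diss_two_nbrs F a b1 b2 : a \in F -> b1 \in F -> b2 \in F -> b1 != b2 ->
  adj a b1 -> adj a b2 -> ~~ dissociation adj F.
Proof.
move=> aF b1F b2F b12 ab1 ab2; apply/negP => /dissP /(_ a aF).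
have : [set b1; b2] \subset [set y in F | adj a y].
  by rewrite subUset !sub1set !inE b1F b2F ab1 ab2.
by move/subset_leq_card; rewrite cards2 b12 => /leq_trans le2 /le2.
Qed.

Lemma dnum_removal S Z z P :
  Z \subset S -> attached S Z z -> avoidable Z z -> (forall F, P F = P (F :\: Z)) ->
  (exists G, [/\ G \subset S :\: Z, dissociation adj G & P G]) ->
  dnum S P = dnum (S :\: Z) P + dnum_all Z.
Proof.
move=> sZS attZ avZ PZ [G0 [sG0 dG0 PG0]].
apply/eqP; rewrite eqn_leq; apply/andP; split.
  apply: dnum_le => F sFS dF PF; rewrite -(cardsID Z F) addnC leq_add //.
    apply: dnum_ge; [by rewrite setSD | exact: diss_sub (subsetDl _ _) dF | by rewrite -PZ].
  by apply: dnum_ge => //; [exact: subsetIr | exact: diss_sub (subsetIl _ _) dF].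
have [G [sG dG PG <-]] := dnum_witness sG0 dG0 PG0.
have [H [sH dH zH sizeH]] :=
  dnum_witness (P := fun F => z \notin F) (sub0set Z) diss0 (negbT (in_set0 z)).
have notZ x : x \in G -> x \notin Z by move/(subsetP sG); rewrite inE => /andP[].
have GH : [disjoint G & H].
  by apply/pred0P => x /=; apply/andP => -[/notZ/negP xZ /(subsetP sH)].
apply: leq_trans (dnum_ge (F := G :|: H) _ _ _).
- by rewrite cardsU_disjoint // leq_add2l sizeH.
- by rewrite subUset (subset_trans sG (subsetDl _ _)) (subset_trans sH).
- apply: diss_union dG dH _ => x y xG yH; apply/negP => xy.
  have yz : y != z by apply: contraNneq zH => <-.
  have xS : x \in S by move/(subsetP sG): xG; rewrite inE => /andP[].
  have := attZ y x (subsetP sH _ yH) yz xS; rewrite adj_sym xy => /(_ isT).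
  exact/negP/notZ.
- rewrite PZ; suff -> : (G :|: H) :\: Z = G by [].
  apply/setP => x; rewrite !inE; case: (boolP (x \in G)) => xG /=.
    by rewrite notZ.
  by case: (boolP (x \in H)) => xH; rewrite ?(subsetP sH _ xH) ?andbF.
Qed.

Lemma avoidable_glue S Z z x : Z \subset S -> attached S Z z -> avoidable Z z ->
  x \notin Z -> avoidable (S :\: Z) x -> avoidable S x.
Proof.
move=> sZS attZ avZ xZ avSZ.
have empty_ok (P : pred {set T}) :
    P set0 -> exists G, [/\ G \subset S :\: Z, dissociation adj G & P G].
  by move=> P0; exists set0; rewrite sub0set diss0.
have x_outside F : (x \notin F) = (x \notin F :\: Z) by rewrite in_setD xZ.
rewrite /avoidable /dnum_all.
rewrite (dnum_removal sZS attZ avZ (P := xpredT) (fun F => erefl) (empty_ok xpredT isT)).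
rewrite (dnum_removal sZS attZ avZ x_outside (empty_ok _ (negbT (in_set0 x)))).
by rewrite leq_add2r.
Qed.

(* If Z is not dissociation but Z minus z is, then Z minus z is maximum. *)
Lemma avoidable_crit Z z :
  z \in Z -> dissociation adj (Z :\ z) -> ~~ dissociation adj Z -> avoidable Z z.
Proof.
move=> zZ dZz ndZ; apply: leq_trans (_ : #|Z :\ z| <= _); last first.
  by apply: dnum_ge => //; [exact: subsetDl | rewrite !inE eqxx].
apply: dnum_le => F sFZ dF _.
have : #|F| < #|Z|.
  apply: proper_card; rewrite properEneq sFZ andbT.
  by apply: contraNneq ndZ => <-.
by rewrite (cardsD1 z Z) zZ add1n ltnS.
Qed.

Lemma avoidable_set0 z : avoidable set0 z.
Proof.
apply: leq_trans (_ : dnum_all set0 <= 0) _ => //.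
by apply: dnum_le => F; rewrite subset0 => /eqP ->; rewrite cards0.
Qed.

Section RootGap.
Variable v : T.

Definition dnum_in S := dnum S (fun F => v \in F).
Definition dnum_out S := dnum S (fun F => v \notin F).

(* Both maxima are attained, e.g. {v} and the empty set are admissible. *)
Lemma dnum_in_witness : exists2 F, dissociation adj F & v \in F /\ #|F| = dnum_in [set: T].
Proof.
have [F [_ dF vF sizeF]] :=
  dnum_witness (P := fun F => v \in F) (subsetT [set v]) (diss1 v) (set11 v).
by exists F.
Qed.

Lemma dnum_out_witness :
  exists2 F, dissociation adj F & v \notin F /\ #|F| = dnum_out [set: T].
Proof.
have [F [_ dF vF sizeF]] :=
  dnum_witness (P := fun F => v \notin F) (sub0set [set: T]) diss0 (negbT (in_set0 v)).
by exists F.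
Qed.

Lemma all_max_iff : in_all_max adj v <-> dnum_out [set: T] < dnum_in [set: T].
Proof.
have [Fi dFi [vFi sizeFi]] := dnum_in_witness.
have [Fo dFo [vFo sizeFo]] := dnum_out_witness.
split => [all_max|lt_out_in F [dF maxF]].
  rewrite ltnNge; apply/negP => le_in_out.
  suff : v \in Fo by rewrite (negbTE vFo).
  apply: all_max; split => // F dF; rewrite sizeFo; case: (boolP (v \in F)) => vF.
    by apply: leq_trans le_in_out; apply: dnum_ge; rewrite ?subsetT.
  by apply: dnum_ge; rewrite ?subsetT.
apply/negPn/negP => vF; have := maxF _ dFi; rewrite sizeFi.
have : #|F| <= dnum_out [set: T] by apply: dnum_ge; rewrite ?subsetT.
move=> le_F_out le_in_F.
by have := leq_ltn_trans (leq_trans le_in_F le_F_out) lt_out_in; rewrite ltnn.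
Qed.

Lemma no_max_iff : in_no_max adj v <-> dnum_in [set: T] < dnum_out [set: T].
Proof.
have [Fi dFi [vFi sizeFi]] := dnum_in_witness.
have [Fo dFo [vFo sizeFo]] := dnum_out_witness.
split => [no_max|lt_in_out F [dF maxF]].
  rewrite ltnNge; apply/negP => le_out_in.
  suff : v \notin Fi by rewrite vFi.
  apply: no_max; split => // F dF; rewrite sizeFi; case: (boolP (v \in F)) => vF.
    by apply: dnum_ge; rewrite ?subsetT.
  by apply: leq_trans le_out_in; apply: dnum_ge; rewrite ?subsetT.
apply/negP => vF; have := maxF _ dFo; rewrite sizeFo.
have : #|F| <= dnum_in [set: T] by apply: dnum_ge; rewrite ?subsetT.
move=> le_F_in le_out_F.
by have := leq_ltn_trans (leq_trans le_out_F le_F_in) lt_in_out; rewrite ltnn.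
Qed.

Definition same_gap S S' :=
  exists c, dnum_in S = dnum_in S' + c /\ dnum_out S = dnum_out S' + c.

Lemma same_gap_refl S : same_gap S S.
Proof. by exists 0; rewrite !addn0. Qed.

Lemma same_gap_trans S1 S2 S3 : same_gap S1 S2 -> same_gap S2 S3 -> same_gap S1 S3.
Proof.
move=> [a [in12 out12]] [b [in23 out23]]; exists (b + a).
by rewrite in12 out12 in23 out23 !addnA.
Qed.

Lemma same_gap_remove S Z z : v \in S -> Z \subset S -> attached S Z z -> avoidable Z z ->
  v \notin Z -> same_gap S (S :\: Z).
Proof.
move=> vS sZS attZ avZ vZ; exists (dnum_all Z).
split; apply: (dnum_removal sZS attZ avZ); try by move=> F; rewrite in_setD vZ.
- by exists [set v]; rewrite sub1set in_setD vZ vS diss1 set11.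
- by exists set0; rewrite sub0set diss0 in_set0.
Qed.

Lemma same_gap_remove_all S A (R : T -> {set T}) (r : T -> T) : v \in S ->
  (forall w, w \in A ->
     [/\ R w \subset S, attached S (R w) (r w), avoidable (R w) (r w) & v \notin R w]) ->
  (forall w1 w2, w1 \in A -> w2 \in A -> w1 != w2 -> [disjoint R w1 & R w2]) ->
  same_gap S (S :\: \bigcup_(w in A) R w).
Proof.
move=> vS; elim: {A}_.+1 {-2}A (ltnSn #|A|) => // n IH A sizeA pieces disjoint_pieces.
have [A0|[a aA]] := set_0Vmem A; first by rewrite A0 big_set0 setD0; exact: same_gap_refl.
have sizeAa : #|A :\ a| < n by move: sizeA; rewrite (cardsD1 a A) aA.
have inAa w : w \in A :\ a -> w \in A by rewrite in_setD1 => /andP[].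
have gap_rest := IH _ sizeAa (fun w wA => pieces w (inAa w wA))
  (fun w1 w2 w1A w2A => disjoint_pieces w1 w2 (inAa w1 w1A) (inAa w2 w2A)).
rewrite (big_setD1 a aA) /= setUC -setDDl; apply: same_gap_trans gap_rest _.
have [sRS attR avR vR] := pieces a aA.
apply: same_gap_remove avR vR.
- rewrite in_setD vS andbT; apply/negP => /bigcupP[w wA vRw].
  by have [_ _ _ /negP] := pieces w (inAa w wA).
- apply/subsetP => y yR; rewrite in_setD (subsetP sRS _ yR) andbT.
  apply/negP => /bigcupP[w]; rewrite in_setD1 => /andP[wa wA] yRw.
  have aw : a != w by rewrite eq_sym.
  by move/pred0P: (disjoint_pieces a w aA wA aw) => /(_ y) /=; rewrite yR yRw.
- by move=> x y xR xr /setDP[yS _]; apply: attR.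
Qed.

End RootGap.

Lemma diss_small F : irreflexive adj -> #|F| <= 2 -> dissociation adj F.
Proof.
move=> adj_irr sizeF; apply/dissP => x xF.
have : [set y in F | adj x y] \subset F :\ x.
  apply/subsetP => y; rewrite !inE => /andP[yF xy]; rewrite yF andbT.
  by apply: contraTneq xy => ->; rewrite adj_irr.
by move/subset_leq_card; move: sizeF; rewrite (cardsD1 x F) xF /=; lia.
Qed.

End Dissociation.

Section RootedTree.
Variables (T : finType) (adj : rel T) (v : T).
Hypothesis adj_sym : symmetric adj.
Hypothesis adj_irr : irreflexive adj.
Hypothesis connected : forall x y, connect adj x y.
Hypothesis acyclic : ~ has_cycle adj.
Implicit Types (S F U : {set T}) (x y z u w a b c : T).

Local Notation dnum_in := (dnum_in adj v).
Local Notation dnum_out := (dnum_out adj v).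
Local Notation same_gap := (same_gap adj v).

Definition walk_len x n := [exists t : n.-tuple T, path adj v t && (last v t == x)].

Lemma walk_lenP x n :
  reflect (exists p, [/\ path adj v p, last v p = x & size p = n]) (walk_len x n).
Proof.
apply: (iffP existsP) => [[t /andP[walk /eqP end_x]]|[p [walk end_x size_p]]].
  by exists t; rewrite size_tuple.
have size_p' : size p == n by rewrite size_p.
by exists (Tuple size_p'); rewrite /= walk end_x eqxx.
Qed.

(* Every vertex is reached by a walk with fewer than #|T| edges: shorten any
   walk from v to a path. *)
Lemma walk_len_short x : exists2 n, n < #|T| & walk_len x n.
Proof.
have /connectP[p walk end_x] := connected v x.
case: (shortenP walk) end_x => q walk_q uniq_q _ end_x.
exists (size q); last by apply/walk_lenP; exists q.
by move/card_uniqP: uniq_q => /= <-; exact: max_card.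
Qed.

Definition depth x := find (walk_len x) (iota 0 #|T|).

Lemma depth_walk x : walk_len x (depth x).
Proof.
have [n lt_n walk_n] := walk_len_short x.
have has_walk : has (walk_len x) (iota 0 #|T|) by apply/hasP; exists n; rewrite ?mem_iota.
have := nth_find 0 has_walk; rewrite nth_iota //.
by move: has_walk; rewrite has_find size_iota.
Qed.

Lemma depth_min x n : walk_len x n -> depth x <= n.
Proof.
move=> walk_n; rewrite leqNgt; apply/negP => lt_n.
have lt_T : n < #|T|.
  apply: leq_trans lt_n _.
  by have := find_size (walk_len x) (iota 0 #|T|); rewrite size_iota.
by move: (before_find 0 lt_n); rewrite nth_iota // walk_n.
Qed.

Lemma depth_root : depth v = 0.
Proof. by apply/eqP; rewrite -leqn0; apply: depth_min; apply/walk_lenP; exists [::]. Qed.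

Lemma depth0 x : depth x = 0 -> x = v.
Proof.
move=> dx0; have := depth_walk x; rewrite dx0 => /walk_lenP[p [_ <- size_p]].
by case: p size_p.
Qed.

Lemma depth_neq_root x : x != v -> 0 < depth x.
Proof. by move=> xv; rewrite lt0n; apply: contra_neq xv => /depth0. Qed.

Lemma depth_adj x y : adj x y -> depth y <= (depth x).+1.
Proof.
move=> xy; have /walk_lenP[p [walk end_x size_p]] := depth_walk x.
apply: depth_min; apply/walk_lenP; exists (rcons p y).
by rewrite rcons_path walk end_x last_rcons size_rcons size_p.
Qed.

Lemma parent_exists x : x != v -> exists y, adj y x /\ (depth y).+1 = depth x.
Proof.
move=> xv; have /walk_lenP[p [walk end_x size_p]] := depth_walk x.
case/lastP: p walk end_x size_p => [|q z] walk.
  by move=> /= end_x; rewrite end_x eqxx in xv.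
move: walk; rewrite rcons_path last_rcons size_rcons => /andP[walk_q qz] <- size_q.
exists (last v q); split => //; apply/eqP.
rewrite eqn_leq -{1}size_q ltnS depth_min /= ?depth_adj //.
by apply/walk_lenP; exists q.
Qed.

(* The parent of x is a neighbour one step closer to v (v is its own parent). *)
Definition parent x :=
  if x == v then v else odflt v [pick y | adj y x && ((depth y).+1 == depth x)].

Lemma parent_root : parent v = v.
Proof. by rewrite /parent eqxx. Qed.

Lemma parent_spec x : x != v -> adj (parent x) x /\ (depth (parent x)).+1 = depth x.
Proof.
move=> xv; have [y [yx dy]] := parent_exists xv.
rewrite /parent (negbTE xv); case: pickP => [z /andP[zx /eqP dz]|/(_ y)] //=.
by rewrite yx dy eqxx.
Qed.

Lemma parent_adj x : x != v -> adj (parent x) x.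
Proof. by case/parent_spec. Qed.

Lemma depth_parent x : depth (parent x) = (depth x).-1.
Proof.
have [->|xv] := eqVneq x v; first by rewrite parent_root depth_root.
by have [_ <-] := parent_spec xv.
Qed.

Lemma depth_iter i x : depth (iter i parent x) = depth x - i.
Proof. by elim: i => [|i IH]; rewrite ?subn0 //= depth_parent IH subnS. Qed.

Lemma iter_parent_root i x : depth x <= i -> iter i parent x = v.
Proof. by move=> dx_i; apply: depth0; rewrite depth_iter; apply/eqP; rewrite subn_eq0. Qed.

Definition parent_edge :=
  [rel a b | ((a != v) && (b == parent a)) || ((b != v) && (a == parent b))].

Lemma parent_edge_sym : symmetric parent_edge.
Proof. by move=> a b; rewrite /= orbC. Qed.

Lemma parent_edge_adj a b : parent_edge a b -> adj a b.
Proof. by case/orP => /andP[av /eqP ->]; [rewrite adj_sym|]; apply: parent_adj. Qed.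

Lemma parent_edge_root a : connect parent_edge a v.
Proof.
elim: {a}(depth a) {-2}a (erefl (depth a)) => [|n IH] a da; first by rewrite (depth0 da).
have av : a != v by apply: contraPneq da => ->; rewrite depth_root.
apply: connect_trans (connect1 _) (IH (parent a) _); first by rewrite /= av eqxx.
by rewrite depth_parent da.
Qed.

(* Since T is acyclic, every edge joins a vertex to its parent: otherwise the
   edge together with the parent paths to v would close a cycle. *)
Lemma tree_edge_parent x y : adj x y -> parent x = y \/ parent y = x.
Proof.
move=> xy.
have [|pxy] := eqVneq (parent x) y; first by left.
have [|pyx] := eqVneq (parent y) x; first by right.
exfalso; apply: acyclic.
have : connect parent_edge x y.
  apply: connect_trans (parent_edge_root x) _.
  by rewrite (sym_connect_sym parent_edge_sym) parent_edge_root.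
case/connectP => p walk end_y; case: (shortenP walk) end_y => q walk_q uniq_q _ end_y.
have walk_adj : path adj x q by apply: sub_path walk_q; apply: parent_edge_adj.
exists (x :: q); split => //; last by rewrite /= rcons_path walk_adj -end_y adj_sym.
case: q walk_q uniq_q end_y walk_adj => [|a [|b q]] //=.
- by move=> _ _ end_y; rewrite -end_y adj_irr in xy.
- move=> /andP[/orP[] /andP[_ /eqP E] _] _ ay _.
    by rewrite ay E eqxx in pxy.
  by rewrite ay E eqxx in pyx.
Qed.

Definition ancestor u x := [exists i : 'I_(depth x).+1, iter i parent x == u].

Lemma ancestorP u x : reflect (exists i, iter i parent x = u) (ancestor u x).
Proof.
apply: (iffP existsP) => [[i /eqP iu]|[i iu]]; first by exists i.
have [le_i|lt_i] := leqP i (depth x).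
  by exists (Ordinal (le_i : i < (depth x).+1)); rewrite /= iu.
exists (Ordinal (ltnSn (depth x))).
by rewrite /= -iu (iter_parent_root (leqnn _)) iter_parent_root // ltnW.
Qed.

Lemma ancestor_refl x : ancestor x x.
Proof. by apply/ancestorP; exists 0. Qed.

Lemma ancestor_trans u w y : ancestor u w -> ancestor w y -> ancestor u y.
Proof.
by move=> /ancestorP[i <-] /ancestorP[j <-]; apply/ancestorP; exists (i + j); rewrite iterD.
Qed.

Lemma ancestor_parent x : ancestor (parent x) x.
Proof. by apply/ancestorP; exists 1. Qed.

Lemma ancestor_root x : ancestor v x.
Proof. by apply/ancestorP; exists (depth x); rewrite iter_parent_root. Qed.

Lemma ancestor_iter x y : ancestor x y -> iter (depth y - depth x) parent y = x.
Proof.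
case/ancestorP => i iy; have [le_i|lt_i] := leqP i (depth y).
  by rewrite -iy depth_iter subKn.
have -> : x = v by rewrite -iy iter_parent_root // ltnW.
by rewrite depth_root subn0 iter_parent_root.
Qed.

Lemma ancestor_depth_lt u x : ancestor u x -> u != x -> depth u < depth x.
Proof.
move=> /ancestorP[[|i] <-] neq; first by rewrite eqxx in neq.
have [xv|xv] := eqVneq x v; first by rewrite xv iter_parent_root ?depth_root ?eqxx in neq.
by rewrite depth_iter; have := depth_neq_root xv; lia.
Qed.

Lemma ancestor_depth_le u x : ancestor u x -> depth u <= depth x.
Proof.
move=> ux; have [->|neq] := eqVneq u x => //.
exact: ltnW (ancestor_depth_lt ux neq).
Qed.

Lemma ancestor_parent_step u x : ancestor u x -> u != x -> ancestor u (parent x).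
Proof.
move=> /ancestorP[[|i] iu] neq; first by rewrite -iu eqxx in neq.
by apply/ancestorP; exists i; rewrite -iterSr.
Qed.

Lemma ancestor_of_root u : ancestor u v -> u = v.
Proof. by move=> /ancestorP[i <-]; rewrite iter_parent_root // depth_root. Qed.

Lemma ancestor_depth_inj a b y : ancestor a y -> ancestor b y -> depth a = depth b -> a = b.
Proof. by move=> /ancestor_iter ay /ancestor_iter by_ dab; rewrite -ay -by_ dab. Qed.

(* The vertex sets reached by pruning: they contain v and are closed under
   parents, i.e. they induce subtrees containing the root. *)
Definition rooted S := v \in S /\ forall x, x \in S -> parent x \in S.

Lemma rooted_iter S i x : rooted S -> x \in S -> iter i parent x \in S.
Proof. by move=> [_ up_closed] xS; elim: i => //= i IH; apply: up_closed. Qed.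

Lemma rooted_setD S U : rooted S -> v \notin U ->
  (forall x, x \in S -> parent x \in U -> x \in U) -> rooted (S :\: U).
Proof.
move=> [vS up_closed] vU down_closed; split; first by rewrite inE vU vS.
move=> x; rewrite !inE => /andP[xU xS]; rewrite up_closed // andbT.
by apply: contra xU; apply: down_closed.
Qed.

Definition subtree S u := [set x in S | ancestor u x].
Definition kids S u := [set w in S | (w != v) && (parent w == u)].

Lemma kids_parent S u w : w \in kids S u -> parent w = u.
Proof. by rewrite inE => /and3P[_ _ /eqP]. Qed.

Lemma kids_mem S u w : w \in kids S u -> w \in S.
Proof. by rewrite inE => /andP[]. Qed.

Lemma kids_neq_root S u w : w \in kids S u -> w != v.
Proof. by rewrite inE => /and3P[]. Qed.

Lemma kids_adj S u w : w \in kids S u -> adj u w.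
Proof. by move=> wu; rewrite -(kids_parent wu) parent_adj // (kids_neq_root wu). Qed.

Lemma kids_depth S u w : w \in kids S u -> depth w = (depth u).+1.
Proof.
by move=> wu; have [_ <-] := parent_spec (kids_neq_root wu); rewrite (kids_parent wu).
Qed.

Lemma kids_neq S u w : w \in kids S u -> w != u.
Proof. by move=> /kids_depth dw; apply/eqP => wu; move: dw; rewrite wu; lia. Qed.

Lemma kids_ancestor S u w : w \in kids S u -> ancestor u w.
Proof. by move=> wu; rewrite -(kids_parent wu) ancestor_parent. Qed.

Lemma kids_mono S S' y : S' \subset S -> kids S' y \subset kids S y.
Proof. by move=> /subsetP sub; apply/subsetP => w; rewrite !inE => /andP[/sub -> ->]. Qed.

Lemma subtree_self S x : x \in S -> x \in subtree S x.
Proof. by move=> xS; rewrite inE xS ancestor_refl. Qed.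

Lemma subtree_mem S x y : y \in subtree S x -> y \in S.
Proof. by rewrite inE => /andP[]. Qed.

Lemma subtree_subset S x : subtree S x \subset S.
Proof. by apply/subsetP => y /subtree_mem. Qed.

Lemma subtree_ancestor S x y : y \in subtree S x -> ancestor x y.
Proof. by rewrite inE => /andP[]. Qed.

Lemma subtree_root S : subtree S v = S.
Proof. by apply/setP => y; rewrite inE ancestor_root andbT. Qed.

Lemma subtree_sub S x y : y \in subtree S x -> subtree S y \subset subtree S x.
Proof.
move=> yx; apply/subsetP => z; rewrite !inE => /andP[-> yz].
exact: ancestor_trans (subtree_ancestor yx) yz.
Qed.

Lemma subtree_kid_sub S x w : w \in kids S x -> subtree S w \subset subtree S x.
Proof.
move=> wx; apply/subsetP => y; rewrite !inE => /andP[-> wy] /=.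
exact: ancestor_trans (kids_ancestor wx) wy.
Qed.

Lemma kid_in_subtree S x c : c \in kids S x -> c \in subtree S x.
Proof. by move=> cx; rewrite inE (kids_mem cx) (kids_ancestor cx). Qed.

Lemma root_notin_subtree S x : x != v -> v \notin subtree S x.
Proof. by move=> xv; rewrite inE; apply: contraNN xv => /andP[_ /ancestor_of_root ->]. Qed.

Lemma subtree_parent_closed S a y : y \in S -> parent y \in subtree S a -> y \in subtree S a.
Proof.
by move=> yS /subtree_ancestor ay; rewrite inE yS (ancestor_trans ay (ancestor_parent y)).
Qed.

Lemma subtree_split S x y : rooted S -> y \in subtree S x -> y != x ->
  exists2 w, w \in kids S x & y \in subtree S w.
Proof.
move=> rS; rewrite inE => /andP[yS xy] yx.
have lt_xy : depth x < depth y by apply: ancestor_depth_lt xy _; rewrite eq_sym.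
exists (iter (depth y - depth x).-1 parent y); last first.
  by rewrite inE yS; apply/ancestorP; exists (depth y - depth x).-1.
have dw : depth (iter (depth y - depth x).-1 parent y) = (depth x).+1.
  by rewrite depth_iter; lia.
rewrite inE rooted_iter //=; apply/andP; split.
  by apply: contraPneq dw => ->; rewrite depth_root.
by rewrite -(iterS _ parent) prednK ?subn_gt0 // (ancestor_iter xy).
Qed.

Lemma subtree_kids_disjoint S x w1 w2 : w1 \in kids S x -> w2 \in kids S x -> w1 != w2 ->
  [disjoint subtree S w1 & subtree S w2].
Proof.
move=> w1x w2x neq; apply/pred0P => y /=.
apply/negP => /andP[/subtree_ancestor a1 /subtree_ancestor a2].
by rewrite (ancestor_depth_inj a1 a2) ?eqxx ?(kids_depth w1x) ?(kids_depth w2x) in neq.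
Qed.

(* Only v is its own parent, and no vertex is adjacent to itself. *)
Lemma parent_of_nbr_neq_root x y : adj x y -> parent y = x -> y != v.
Proof. by move=> xy pyx; apply: contraTneq xy => yv; rewrite -pyx yv parent_root adj_irr. Qed.

Lemma nbr_parent_or_kid S y z : z \in S -> adj y z -> z = parent y \/ z \in kids S y.
Proof.
move=> zS yz; case: (tree_edge_parent yz) => [->|pz]; [by left|right].
by rewrite inE zS pz eqxx andbT (parent_of_nbr_neq_root yz pz).
Qed.

Lemma nbrs_parent_kids S F y : F \subset S ->
  [set z in F | adj y z] \subset parent y |: kids S y.
Proof.
move=> /subsetP sFS; apply/subsetP => z; rewrite inE => /andP[zF yz].
by rewrite in_setU1; case: (nbr_parent_or_kid (sFS _ zF) yz) => [->|->]; rewrite ?eqxx ?orbT.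
Qed.

Lemma subtree_attached S x : attached adj S (subtree S x) x.
Proof.
move=> y z yx neq zS yz; rewrite inE zS /=.
case: (nbr_parent_or_kid zS yz) => [->|zy].
  by apply: ancestor_parent_step (subtree_ancestor yx) _; rewrite eq_sym.
exact: ancestor_trans (subtree_ancestor yx) (kids_ancestor zy).
Qed.

Lemma radj_sym S : symmetric (radj adj S).
Proof. by move=> a b; rewrite /radj /= adj_sym; case: (a \in S); case: (b \in S). Qed.

(* A vertex of S that is not below u reaches v along its parent path,
   which avoids u. *)
Lemma connect_root_avoiding S u x : rooted S -> x \in S -> ~~ ancestor u x ->
  connect (radj adj (S :\ u)) x v.
Proof.
move=> rS; elim: {x}(depth x) {-2}x (erefl (depth x)) => [|n IH] x dx xS ux.
  by rewrite (depth0 dx).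
have xv : x != v by apply: contraPneq dx => ->; rewrite depth_root.
have upx : ~~ ancestor u (parent x).
  by apply: contra ux => upx; exact: ancestor_trans upx (ancestor_parent x).
apply: connect_trans (connect1 _) (IH _ _ (rS.2 _ xS) upx); last by rewrite depth_parent dx.
rewrite /radj /= !in_setD1 xS rS.2 // adj_sym parent_adj // !andbT.
by apply/andP; split; [apply: contraNneq ux | apply: contraNneq upx] => ->;
  rewrite ancestor_refl.
Qed.

(* Conversely, removing u != v separates its descendants from v, because no
   edge leaves the set of non-descendants of u once u is gone. *)
Lemma subtree_separated S u x : u != v -> ancestor u x ->
  ~~ connect (radj adj (S :\ u)) v x.
Proof.
move=> uv ux; apply/negP => reach_x.
have closed_out : closed (radj adj (S :\ u)) [pred a | ~~ ancestor u a].
  apply: intro_closed; first exact: sym_connect_sym (radj_sym _).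
  move=> a b; rewrite /radj /= !in_setD1 => /and3P[_ /andP[bu _] ab] ua.
  apply: contra ua => ub; case: (tree_edge_parent ab) => pab.
    by apply: ancestor_trans ub _; rewrite -pab ancestor_parent.
  by rewrite -pab; apply: ancestor_parent_step ub _; rewrite eq_sym.
have := closed_connect closed_out reach_x; rewrite !inE ux /=.
by move/negbFE/ancestor_of_root => uvE; rewrite uvE eqxx in uv.
Qed.

Lemma desc_eq S u : rooted S -> desc adj v S u = subtree S u.
Proof.
move=> rS; rewrite /desc; case: eqP => [->|/eqP uv]; first by rewrite subtree_root.
apply/setP => x; rewrite !inE; case: (boolP (x \in S)) => //= xS.
apply/idP/idP => [|/(subtree_separated S uv)//].
apply: contraR => ux; rewrite (sym_connect_sym (radj_sym _)).
exact: connect_root_avoiding.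
Qed.

Lemma children_eq S u : rooted S -> children adj v S u = kids S u.
Proof.
move=> rS; apply/setP => w; rewrite /children desc_eq // !inE.
apply/idP/idP => [/andP[/andP[wS uw] adj_uw]|wu]; last first.
  have wu' : w \in kids S u by rewrite inE.
  by rewrite (kids_mem wu') (kids_ancestor wu') (kids_adj wu').
case: (tree_edge_parent adj_uw) => pu; last first.
  by rewrite wS pu eqxx andbT (parent_of_nbr_neq_root adj_uw pu).
have uv : u != v by apply: (parent_of_nbr_neq_root _ pu); rewrite adj_sym.
by have := ancestor_depth_le uw; have [_ <-] := parent_spec uv; rewrite pu ltnn.
Qed.

Lemma childrenmod_eq S u i : rooted S ->
  childrenmod adj v S u i = [set w in kids S u | #|subtree S w| %% 3 == i].
Proof.
move=> rS; apply/setP => w; rewrite /childrenmod children_eq // !inE.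
by case: (boolP (w \in kids S u)) => //= _; rewrite desc_eq.
Qed.

Lemma is_dist_depth S x : rooted S -> x \in S -> is_dist adj S v x (depth x).
Proof.
move=> rS xS; split; last first.
  move=> p walk end_x; apply: depth_min; apply/walk_lenP; exists p; split => //.
  by apply: sub_path walk => a b; rewrite /radj /= => /and3P[].
elim: {x}(depth x) {-2}x (erefl (depth x)) xS => [|n IH] x dx xS.
  by exists [::]; split; rewrite ?dx ?(depth0 dx).
have xv : x != v by apply: contraPneq dx => ->; rewrite depth_root.
have [|p [walk end_p size_p]] := IH (parent x) _ (rS.2 _ xS); first by rewrite depth_parent dx.
exists (rcons p x); rewrite rcons_path last_rcons size_rcons walk end_p size_p depth_parent dx.
by split => //; rewrite /radj /= rS.2 // xS parent_adj.
Qed.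

Lemma nonbranch_kids S y : rooted S -> y \in S -> y != v -> ~~ branch adj S y ->
  #|kids S y| <= 1.
Proof.
move=> rS yS yv; rewrite /branch yS /= -ltnNge ltnS => deg_y.
have py : parent y \notin kids S y.
  by apply/negP => /kids_depth; have [_ <-] := parent_spec yv; lia.
have : #|parent y |: kids S y| <= 2.
  apply: leq_trans deg_y; apply: subset_leq_card; rewrite subUset sub1set inE rS.2 //.
  rewrite adj_sym parent_adj //=; apply/subsetP => w wy.
  by rewrite inE (kids_mem wy) (kids_adj wy).
by rewrite cardsU1 py.
Qed.

Lemma subtree_leaf S x : rooted S -> x \in S -> kids S x = set0 -> subtree S x = [set x].
Proof.
move=> rS xS no_kid; apply/setP => y; rewrite in_set1.
apply/idP/idP => [yx|/eqP->]; last exact: subtree_self.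
have [//|yx'] := eqVneq y x; have [w wx _] := subtree_split rS yx yx'.
by rewrite no_kid inE in wx.
Qed.

Lemma subtree_one_kid S x c : rooted S -> x \in S -> kids S x = [set c] ->
  subtree S x = x |: subtree S c /\ x \notin subtree S c.
Proof.
move=> rS xS kid_c; have cx : c \in kids S x by rewrite kid_c set11.
split.
  apply/setP => y; rewrite in_setU1; apply/idP/idP => [yx|/orP[/eqP->|yc]].
  - have [//|yx'] := eqVneq y x.
    have [w wx yw] := subtree_split rS yx yx'.
    by move: wx; rewrite kid_c inE => /eqP wc; rewrite -wc yw orbT.
  - exact: subtree_self.
  - exact: (subsetP (subtree_kid_sub cx)).
by apply/negP => /subtree_ancestor /ancestor_depth_le; rewrite (kids_depth cx) ltnn.
Qed.

Lemma subtree_card1 S x : x \in S -> #|subtree S x| = 1 ->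
  subtree S x = [set x] /\ kids S x = set0.
Proof.
move=> xS size1; have /cards1P[y Dy] : #|subtree S x| == 1 by rewrite size1.
have Dx : subtree S x = [set x].
  by rewrite Dy; move: (subtree_self xS); rewrite Dy inE => /eqP ->.
split => //; apply/setP => c; rewrite in_set0; apply/negP => cx.
have := kid_in_subtree cx.
by rewrite Dx inE; apply/negP; exact: kids_neq cx.
Qed.

Definition hanging_path S x := forall y, y \in subtree S x -> #|kids S y| <= 1.

Definition next_kid S x := odflt x [pick c in kids S x].

Lemma hanging_path_sub S x y : hanging_path S x -> y \in subtree S x -> hanging_path S y.
Proof. by move=> path_x yx z zy; apply: path_x; exact: (subsetP (subtree_sub yx)). Qed.

Lemma hanging_path_next S x : rooted S -> x \in S -> hanging_path S x ->
  1 < #|subtree S x| ->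
  [/\ kids S x = [set next_kid S x], subtree S x = x |: subtree S (next_kid S x),
      x \notin subtree S (next_kid S x), hanging_path S (next_kid S x)
    & #|subtree S x| = (#|subtree S (next_kid S x)|).+1].
Proof.
move=> rS xS path_x size_x.
have le1 : #|kids S x| <= 1 by apply: path_x; exact: subtree_self.
have /cards1P[c kid_c] : #|kids S x| == 1.
  rewrite eqn_leq le1 lt0n cards_eq0; apply: contraTneq size_x => no_kid.
  by rewrite (subtree_leaf rS xS no_kid) cards1.
have -> : next_kid S x = c.
  by rewrite /next_kid kid_c; case: pickP => [c'|/(_ c)]; rewrite inE ?eqxx // => /eqP.
have [Dx xc] := subtree_one_kid rS xS kid_c.
have cx : c \in kids S x by rewrite kid_c set11.
split => //; last by rewrite Dx cardsU1 xc.
exact: hanging_path_sub path_x (kid_in_subtree cx).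
Qed.

Lemma hanging_path_iter S x k : rooted S -> x \in S -> hanging_path S x ->
  k < #|subtree S x| ->
  [/\ iter k (next_kid S) x \in subtree S x, hanging_path S (iter k (next_kid S) x)
    & #|subtree S (iter k (next_kid S) x)| = #|subtree S x| - k].
Proof.
move=> rS xS path_x; elim: k => [|k IH] lt_k /=; first by rewrite subn0 subtree_self.
have [yx path_y size_y] := IH (ltnW lt_k).
move: yx path_y size_y; set y := iter k (next_kid S) x => yx path_y size_y.
have [|kid_y _ _ path_c size_c] := hanging_path_next rS (subtree_mem yx) path_y; first by lia.
have cy : next_kid S y \in kids S y by rewrite kid_y set11.
split; [exact: (subsetP (subtree_sub yx)) (kid_in_subtree cy) | done | lia].
Qed.

Lemma notin_subtree_deeper S a b : depth a < depth b -> a \notin subtree S b.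
Proof.
by move=> lt_ab; apply/negP => /subtree_ancestor /ancestor_depth_le; rewrite leqNgt lt_ab.
Qed.

(* Three consecutive vertices x, c, g going down: {c, g} is their only
   maximum dissociation set, and it avoids x. *)
Lemma path3_avoidable S x c g : c \in kids S x -> g \in kids S c ->
  avoidable adj (x |: (c |: [set g])) x.
Proof.
move=> cx gc; apply: avoidable_crit; first by rewrite !inE eqxx.
  apply: diss_small adj_irr _; apply: leq_trans (_ : #|[set c; g]| <= 2).
    by apply: subset_leq_card; apply/subsetP => y; rewrite !inE => /andP[/negbTE -> /=].
  by rewrite cards2; case: (c != g).
apply: (not_diss_two_nbrs (a := c) (b1 := x) (b2 := g)); rewrite ?inE ?eqxx ?orbT //.
- by apply/eqP => xg; move: (kids_depth gc) (kids_depth cx); rewrite -xg; lia.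
- by rewrite adj_sym (kids_adj cx).
- exact: kids_adj gc.
Qed.

Lemma hanging_path_top3 S x : rooted S -> x \in S -> hanging_path S x ->
  3 <= #|subtree S x| ->
  exists c g, [/\ c \in kids S x, g \in kids S c, hanging_path S g,
    subtree S x = x |: (c |: subtree S g) & #|subtree S x| = (#|subtree S g|).+2].
Proof.
move=> rS xS path_x size_x.
have [|kid_x Dx _ path_c size_c] := hanging_path_next rS xS path_x; first by lia.
set c := next_kid S x in kid_x Dx path_c size_c.
have cx : c \in kids S x by rewrite kid_x set11.
have [|kid_c Dc _ path_g size_g] := hanging_path_next rS (kids_mem cx) path_c; first by lia.
set g := next_kid S c in kid_c Dc path_g size_g.
have gc : g \in kids S c by rewrite kid_c set11.
by exists c, g; split; rewrite // ?size_c ?size_g // Dx Dc.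
Qed.

(* A hanging path with a multiple of 3 vertices is avoidable at its top:
   remove the bottom part inductively, then use path3_avoidable. *)
Lemma hanging_path_avoidable S k x : rooted S -> x \in S -> hanging_path S x ->
  #|subtree S x| = 3 * k.+1 -> avoidable adj (subtree S x) x.
Proof.
move=> rS; elim: k x => [|k IH] x xS path_x size_x;
  (have [|c [g [cx gc path_g Dx size_g]]] := hanging_path_top3 rS xS path_x; first by lia).
  have [|Dg _] := subtree_card1 (kids_mem gc); first by lia.
  by rewrite Dx Dg; exact: path3_avoidable cx gc.
have [|kid_g Dg gh path_h size_h] := hanging_path_next rS (kids_mem gc) path_g; first by lia.
set h := next_kid S g in kid_g Dg gh path_h size_h.
have hg : h \in kids S g by rewrite kid_g set11.
have avoid_h : avoidable adj (subtree S h) h by apply: IH (kids_mem hg) path_h _; lia.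
have deep y : depth y < depth h -> y \notin subtree S h by apply: notin_subtree_deeper.
have xh : x \notin subtree S h.
  by apply: deep; rewrite (kids_depth hg) (kids_depth gc) (kids_depth cx); lia.
have ch : c \notin subtree S h by apply: deep; rewrite (kids_depth hg) (kids_depth gc); lia.
have sub_h : subtree S h \subset subtree S x by rewrite Dx Dg !subsetU ?subxx ?orbT.
have att_h := attached_sub (subtree_subset S x) (subtree_attached (S := S) (x := h)).
have top3 : subtree S x :\: subtree S h = x |: (c |: [set g]).
  apply/setP => y; rewrite Dx Dg in_setD !in_setU1 in_set1.
  have [->|] := eqVneq y x; first by rewrite xh.
  have [->|] := eqVneq y c; first by rewrite ch.
  have [->|] := eqVneq y g; first by rewrite gh.
  by rewrite andbC; case: (y \in subtree S h).
apply: (avoidable_glue adj_sym sub_h att_h avoid_h xh).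
by rewrite top3; exact: path3_avoidable cx gc.
Qed.

(* Reducing a leg D[w] to its length mod 3 removes its lowest 3 floor(|D[w]|/3)
   vertices, which hang from leg_top S w. *)
Definition leg_top S w := iter (#|subtree S w| %% 3) (next_kid S) w.
Definition leg_cut S w := if 3 <= #|subtree S w| then subtree S (leg_top S w) else set0.

Lemma leg_cut_attached S w : attached adj S (leg_cut S w) (leg_top S w).
Proof.
by rewrite /leg_cut; case: ifP => _; [exact: subtree_attached | move=> ? ?; rewrite inE].
Qed.

Lemma leg_cut_down_closed S w y : y \in S -> parent y \in leg_cut S w -> y \in leg_cut S w.
Proof. by rewrite /leg_cut; case: ifP => _; [exact: subtree_parent_closed | rewrite inE]. Qed.

Section LegCut.
Variables (S : {set T}) (w : T).
Hypotheses (rS : rooted S) (wS : w \in S) (path_w : hanging_path S w).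

Lemma leg_top_spec : 3 <= #|subtree S w| ->
  [/\ leg_top S w \in subtree S w, hanging_path S (leg_top S w)
    & #|subtree S (leg_top S w)| = #|subtree S w| - #|subtree S w| %% 3].
Proof. by move=> size_w; apply: hanging_path_iter => //; lia. Qed.

Lemma leg_cut_sub : leg_cut S w \subset subtree S w.
Proof.
rewrite /leg_cut; case: ifPn => [size_w|_]; last exact: sub0set.
by have [top_w _ _] := leg_top_spec size_w; exact: subtree_sub.
Qed.

Lemma leg_cut_avoidable : avoidable adj (leg_cut S w) (leg_top S w).
Proof.
rewrite /leg_cut; case: ifPn => [size_w|_]; last exact: avoidable_set0.
have [top_w path_top size_top] := leg_top_spec size_w.
apply: (hanging_path_avoidable (k := (#|subtree S w| %/ 3).-1) rS (subtree_mem top_w) path_top).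
by lia.
Qed.

Lemma leg_cut_top : (w \in leg_cut S w) = (#|subtree S w| %% 3 == 0).
Proof.
have size_w : 0 < #|subtree S w| by apply/card_gt0P; exists w; exact: subtree_self.
rewrite /leg_cut; case: ifPn => [ge3|]; last by rewrite inE; lia.
have [top_w _ size_top] := leg_top_spec ge3.
apply/idP/eqP => [w_top|mod0]; last by rewrite /leg_top mod0 subtree_self.
have top_eq : leg_top S w = w.
  apply: ancestor_depth_inj (subtree_ancestor w_top) (ancestor_refl w) _.
  apply/eqP; rewrite eqn_leq !ancestor_depth_le //.
  - exact: subtree_ancestor top_w.
  - exact: subtree_ancestor w_top.
by move: size_top; rewrite top_eq; lia.
Qed.

Lemma leg_cut_rest : #|subtree S w :\: leg_cut S w| = #|subtree S w| %% 3.
Proof.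
rewrite cardsDS ?leg_cut_sub // /leg_cut; case: ifPn => [ge3|]; last by rewrite cards0; lia.
by have [_ _ ->] := leg_top_spec ge3; lia.
Qed.

End LegCut.

Definition legs S x k := [set w in kids S x | #|subtree S w| == k].

Definition spider S x := forall w, w \in kids S x ->
  hanging_path S w /\ (#|subtree S w| = 1 \/ #|subtree S w| = 2).

Lemma legs_kid S x k w : w \in legs S x k -> w \in kids S x.
Proof. by rewrite inE => /andP[]. Qed.

Lemma legs_size S x k w : w \in legs S x k -> #|subtree S w| = k.
Proof. by rewrite inE => /andP[_ /eqP]. Qed.

Lemma legsI S x k w : w \in kids S x -> #|subtree S w| = k -> w \in legs S x k.
Proof. by move=> wx size_w; rewrite /legs in_set wx size_w eqxx. Qed.

Lemma leg2_shape S w : rooted S -> w \in S -> hanging_path S w -> #|subtree S w| = 2 ->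
  exists c, [/\ kids S w = [set c], subtree S w = [set w; c] & kids S c = set0].
Proof.
move=> rS wS path_w size_w.
have [|kid_w Dw _ _ size_c] := hanging_path_next rS wS path_w; first by rewrite size_w.
have cw : next_kid S w \in kids S w by rewrite kid_w set11.
have [|Dc leaf_c] := subtree_card1 (kids_mem cw); first by lia.
by exists (next_kid S w); rewrite Dw Dc.
Qed.

Definition reduce_legs S x := S :\: \bigcup_(w in kids S x) leg_cut S w.

Section ReduceLegs.
Variables (S : {set T}) (x : T).
Hypotheses (rS : rooted S) (xS : x \in S)
  (paths : forall w, w \in kids S x -> hanging_path S w).

Local Notation removed := (\bigcup_(w in kids S x) leg_cut S w).
Local Notation R := (reduce_legs S x).

Lemma leg_cut_in_leg w y : w \in kids S x -> y \in leg_cut S w -> y \in subtree S w.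
Proof. by move=> wx; apply/subsetP/(leg_cut_sub rS (kids_mem wx) (paths wx)). Qed.

Lemma removed_below y : y \in removed -> exists2 w, w \in kids S x & y \in subtree S w.
Proof. by case/bigcupP => w wx /(leg_cut_in_leg wx) yw; exists w. Qed.

Lemma removed_in_leg w y : w \in kids S x -> y \in subtree S w ->
  (y \in removed) = (y \in leg_cut S w).
Proof.
move=> wx yw; apply/bigcupP/idP => [[w' w'x yw']|]; last by exists w.
have [->//|neq] := eqVneq w w'.
have := subtree_kids_disjoint wx w'x neq.
by move/pred0P/(_ y); rewrite /= yw (leg_cut_in_leg w'x yw').
Qed.

Lemma root_notin_removed : v \notin removed.
Proof.
apply/negP => /removed_below[w wx]; apply/negP.
exact: root_notin_subtree (kids_neq_root wx).
Qed.

Lemma reduce_legs_gap : same_gap S R.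
Proof.
apply: (same_gap_remove_all adj_sym (r := leg_top S) rS.1) => [w wx|w1 w2 w1x w2x neq].
  have [wS path_w] := (kids_mem wx, paths wx).
  split; [|exact: leg_cut_attached | exact: leg_cut_avoidable |].
  - exact: subset_trans (leg_cut_sub rS wS path_w) (subtree_subset S w).
  - by apply: contra (root_notin_subtree S (kids_neq_root wx)); exact: leg_cut_in_leg.
apply/pred0P => y /=; apply/andP => -[/(leg_cut_in_leg w1x) y1 /(leg_cut_in_leg w2x) y2].
by move/pred0P/(_ y): (subtree_kids_disjoint w1x w2x neq); rewrite /= y1 y2.
Qed.

Lemma reduce_legs_rooted : rooted R.
Proof.
apply: rooted_setD rS root_notin_removed _ => y yS /bigcupP[w wx pyw].
by apply/bigcupP; exists w => //; exact: leg_cut_down_closed pyw.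
Qed.

Lemma reduce_legs_root : x \in R.
Proof.
rewrite in_setD xS andbT; apply/negP => /removed_below[w wx /subtree_ancestor].
by move/ancestor_depth_le; rewrite (kids_depth wx) ltnn.
Qed.

Lemma reduce_legs_outside : R :\: subtree R x = S :\: subtree S x.
Proof.
apply/setP => y; rewrite !inE; case: (boolP (ancestor x y)) => [_|xy].
  by case: (y \in S); case: (y \in removed).
suff -> : (y \in removed) = false by case: (y \in S).
apply/negP => /removed_below[w wx /subtree_ancestor wy].
by rewrite (ancestor_trans (kids_ancestor wx) wy) in xy.
Qed.

Lemma reduce_legs_kids w : (w \in kids R x) = (w \in kids S x) && (#|subtree S w| %% 3 != 0).
Proof.
case: (boolP (w \in kids S x)) => wx /=; last first.
  by apply: contraNF wx; apply/subsetP/kids_mono/subsetDl.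
rewrite -(leg_cut_top rS (kids_mem wx) (paths wx)).
rewrite -(removed_in_leg wx (subtree_self (kids_mem wx))).
by move: wx; rewrite !inE => /and3P[-> -> ->]; rewrite !andbT.
Qed.

Lemma reduce_legs_subtree w : w \in kids S x -> subtree R w = subtree S w :\: leg_cut S w.
Proof.
move=> wx; apply/setP => y; rewrite !inE.
case: (boolP (ancestor w y)) => wy; rewrite ?andbF //= !andbT.
case: (boolP (y \in S)) => yS; rewrite ?andbF //= andbT.
by rewrite andbT (removed_in_leg wx) // inE yS wy.
Qed.

Lemma reduce_legs_spider : spider R x.
Proof.
move=> w; rewrite reduce_legs_kids => /andP[wx mod_w].
have DR := reduce_legs_subtree wx.
split; last first.
  by rewrite DR (leg_cut_rest rS (kids_mem wx) (paths wx)); move: mod_w; lia.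
move=> y; rewrite DR => /setDP[yw _].
apply: leq_trans (paths wx yw); apply/subset_leq_card/kids_mono/subsetDl.
Qed.

Lemma reduce_legs_legs k : k != 0 ->
  legs R x k = [set w in kids S x | #|subtree S w| %% 3 == k].
Proof.
move=> k0; apply/setP => w; rewrite [RHS]in_set.
have rest : w \in kids S x -> #|subtree R w| = #|subtree S w| %% 3.
  by move=> wx; rewrite (reduce_legs_subtree wx) (leg_cut_rest rS (kids_mem wx) (paths wx)).
apply/idP/andP => [wR|[wx /eqP mod_w]].
  have := legs_kid wR; rewrite reduce_legs_kids => /andP[wx _].
  by rewrite -(legs_size wR) rest.
by apply: legsI; rewrite ?reduce_legs_kids ?wx ?mod_w ?rest.
Qed.

End ReduceLegs.

Section Spider.
Variables (S : {set T}) (x : T).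
Hypotheses (rS : rooted S) (xS : x \in S) (spS : spider S x).

Lemma spider_leg1 w : w \in legs S x 1 -> subtree S w = [set w] /\ kids S w = set0.
Proof. by move=> wx; exact: subtree_card1 (kids_mem (legs_kid wx)) (legs_size wx). Qed.

Lemma spider_leg2 w : w \in legs S x 2 ->
  exists c, [/\ kids S w = [set c], subtree S w = [set w; c] & kids S c = set0].
Proof.
move=> wx; have wx' := legs_kid wx.
exact: leg2_shape rS (kids_mem wx') (spS wx').1 (legs_size wx).
Qed.

Lemma spider_leg w : w \in kids S x -> w \in legs S x 1 \/ w \in legs S x 2.
Proof. by move=> wx; case: (spS wx).2 => size_w; [left|right]; apply: legsI. Qed.

(* Without its centre, a spider is a disjoint union of paths of at most two
   vertices, hence a dissociation set. *)
Lemma spider_diss_minus_centre : dissociation adj (subtree S x :\ x).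
Proof.
apply/dissP => y; rewrite in_setD1 => /andP[yx yD].
have [w wx yw] := subtree_split rS yD yx.
set N := [set z in subtree S x :\ x | adj y z].
have nbrs : N \subset parent y |: kids S y.
  exact: nbrs_parent_kids (subset_trans (subsetDl _ _) (subtree_subset S x)).
have at_most a : N \subset [set a] -> #|N| <= 1 by move/subset_leq_card; rewrite cards1.
case: (spider_leg wx) => [w1|w2].
  have [Dw leaf_w] := spider_leg1 w1; rewrite Dw inE in yw.
  by apply: (at_most (parent y)); apply: subset_trans nbrs _; rewrite (eqP yw) leaf_w setU0.
have [c [kid_w Dw leaf_c]] := spider_leg2 w2; rewrite Dw !inE in yw.
case/orP: yw => /eqP yE.
  apply: (at_most c); apply/subsetP => z zN; move: (subsetP nbrs _ zN).
  rewrite yE kid_w !inE (kids_parent wx) => /orP[/eqP zx|//].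
  by move: zN; rewrite /N !inE zx eqxx.
by apply: (at_most (parent y)); apply: subset_trans nbrs _; rewrite yE leaf_c setU0.
Qed.

Lemma spider_not_diss : (0 < #|legs S x 2|) || (1 < #|kids S x|) ->
  ~~ dissociation adj (subtree S x).
Proof.
case/orP => [/card_gt0P[w w2]|/card_gt1P[w1 [w2 [w1x w2x neq]]]]; last first.
  apply: (not_diss_two_nbrs (a := x) (b1 := w1) (b2 := w2)) => //.
  - exact: subtree_self.
  - exact: kid_in_subtree w1x.
  - exact: kid_in_subtree w2x.
  - exact: kids_adj w1x.
  - exact: kids_adj w2x.
have wx := legs_kid w2; have [c [kid_w Dw _]] := spider_leg2 w2.
have cw : c \in kids S w by rewrite kid_w set11.
apply: (not_diss_two_nbrs (a := w) (b1 := x) (b2 := c)).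
- exact: kid_in_subtree wx.
- exact: subtree_self.
- exact: (subsetP (subtree_kid_sub wx)) _ (kid_in_subtree cw).
- by apply/eqP => xc; move: (kids_depth cw) (kids_depth wx); rewrite -xc; lia.
- by rewrite adj_sym (kids_adj wx).
- exact: kids_adj cw.
Qed.

End Spider.

Definition feet S := [set y in S | (y != v) && (parent y \in legs S v 2)].

Section RootSpider.
Variable S : {set T}.
Hypotheses (rS : rooted S) (spS : spider S v).

Lemma feet_mem y : y \in feet S -> y \in S.
Proof. by rewrite inE => /andP[]. Qed.

Lemma feet_neq_root y : y \in feet S -> y != v.
Proof. by rewrite inE => /and3P[]. Qed.

Lemma feet_kid y : y \in feet S -> y \in kids S (parent y).
Proof. by rewrite !inE => /and3P[-> -> _]; rewrite eqxx. Qed.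

Lemma feet_parent y : y \in feet S -> parent y \in legs S v 2.
Proof. by rewrite inE => /and3P[]. Qed.

Lemma feet_parent_neq_root y : y \in feet S -> parent y != v.
Proof. by move/feet_parent/legs_kid/kids_neq_root. Qed.

Lemma legs_parent k w : w \in legs S v k -> parent w = v.
Proof. by move/legs_kid/kids_parent. Qed.

Lemma feet_leaf y : y \in feet S -> kids S y = set0.
Proof.
move=> yF; have [c [kid_w _ leaf_c]] := spider_leg2 rS spS (feet_parent yF).
by move: (feet_kid yF); rewrite kid_w inE => /eqP ->.
Qed.

Lemma feet_inj y1 y2 : y1 \in feet S -> y2 \in feet S -> parent y1 = parent y2 -> y1 = y2.
Proof.
move=> y1F y2F same; have [c [kid_w _ _]] := spider_leg2 rS spS (feet_parent y1F).
have := feet_kid y2F; rewrite -same kid_w inE => /eqP ->.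
by move: (feet_kid y1F); rewrite kid_w inE => /eqP.
Qed.

Lemma spider_vertex_cases y : y \in S -> y != v ->
  [|| y \in legs S v 1, y \in legs S v 2 | y \in feet S].
Proof.
move=> yS yv; have [|w wv yw] := subtree_split rS (_ : y \in subtree S v) yv.
  by rewrite subtree_root.
case: (spider_leg spS wv) => [w1|w2].
  by have [Dw _] := spider_leg1 w1; rewrite Dw inE in yw; rewrite (eqP yw) w1.
have [c [kid_w Dw _]] := spider_leg2 rS spS w2.
rewrite Dw !inE in yw; case/orP: yw => /eqP ->; first by rewrite w2 orbT.
have cw : c \in kids S w by rewrite kid_w set11.
by apply/or3P/Or33; rewrite /feet in_set (kids_mem cw) (kids_neq_root cw) (kids_parent cw) w2.
Qed.

Lemma card_feet : #|feet S| = #|legs S v 2|.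
Proof.
have -> : legs S v 2 = parent @: feet S.
  apply/setP => w; apply/idP/imsetP => [w2|[y yF ->]]; last exact: feet_parent.
  have [c [kid_w _ _]] := spider_leg2 rS spS w2.
  have cw : c \in kids S w by rewrite kid_w set11.
  exists c; last by rewrite (kids_parent cw).
  by rewrite /feet in_set (kids_mem cw) (kids_neq_root cw) (kids_parent cw) w2.
by rewrite card_in_imset // => y1 y2; exact: feet_inj.
Qed.

Lemma card_spider : #|S :\ v| = #|legs S v 1| + 2 * #|legs S v 2|.
Proof.
have -> : S :\ v = legs S v 1 :|: legs S v 2 :|: feet S.
  apply/setP => y; rewrite in_setD1 !in_setU -orbA.
  apply/andP/idP => [[yv yS]|]; first exact: spider_vertex_cases.
  case/or3P => [/legs_kid|/legs_kid|yF];
    try by move=> yv; rewrite (kids_neq_root yv) (kids_mem yv).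
  by rewrite (feet_neq_root yF) (feet_mem yF).
rewrite !cardsU_disjoint ?card_feet; first lia.
- by apply/pred0P => y /=; apply/negbTE/negP => /andP[/legs_size s1 /legs_size]; rewrite s1.
- apply/pred0P => y /=; apply/negbTE/negP; rewrite in_setU => /andP[].
  by case/orP => /legs_parent pv /feet_parent_neq_root; rewrite pv eqxx.
Qed.

(* Without v, the whole spider is dissociation. *)
Lemma spider_dnum_out : dnum_out S = #|legs S v 1| + 2 * #|legs S v 2|.
Proof.
rewrite -card_spider; apply/eqP; rewrite eqn_leq; apply/andP; split.
  apply: dnum_le => F sFS _ vF; apply: subset_leq_card.
  apply/subsetP => y yF; rewrite in_setD1 (subsetP sFS _ yF) andbT.
  by apply: contraNneq vF => <-.
apply: dnum_ge; first exact: subsetDl.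
- by have := spider_diss_minus_centre rS spS; rewrite subtree_root.
- by rewrite /= in_setD1 eqxx.
Qed.

Definition leg_of y := if parent y == v then y else parent y.

(* A dissociation set through v contains at most one vertex of each
   two-vertex leg (both would be adjacent and the top one also to v), and at
   most one one-vertex leg (v has at most one neighbour in it). *)
Lemma spider_dnum_in_le F : F \subset S -> dissociation adj F -> v \in F ->
  #|F| <= (#|legs S v 2| + minn 1 #|legs S v 1|).+1.
Proof.
move=> sFS dF vF.
have not_leg_and_foot a b :
    a \in F -> b \in F -> a != v -> parent a = v -> a = parent b -> False.
  move=> aF bF av pa ab; suff : ~~ dissociation adj F by rewrite dF.
  have bv : b != v by apply: contra_neq av => bvE; rewrite ab bvE parent_root.
  apply: (not_diss_two_nbrs (a := a) (b1 := v) (b2 := b)) => //.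
  - by rewrite eq_sym.
  - by rewrite -{1}pa adj_sym parent_adj.
  - by rewrite ab parent_adj.
have foot y : y \in F -> y != v -> parent y != v -> y \in feet S.
  move=> yF yv pyv; have := spider_vertex_cases (subsetP sFS _ yF) yv.
  by case/or3P => // /legs_parent pv; rewrite pv eqxx in pyv.
have inj : {in F :\ v &, injective leg_of}.
  move=> y1 y2; rewrite !in_setD1 /leg_of => /andP[y1v y1F] /andP[y2v y2F].
  have [p1|p1] := eqVneq (parent y1) v; have [p2|p2] := eqVneq (parent y2) v => // same.
  - by case: (not_leg_and_foot y1 y2).
  - by case: (not_leg_and_foot y2 y1).
  - exact: feet_inj (foot _ y1F y1v p1) (foot _ y2F y2v p2) same.
have img : leg_of @: (F :\ v) \subset legs S v 2 :|: (F :&: legs S v 1).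
  apply/subsetP => z /imsetP[y]; rewrite in_setD1 /leg_of => /andP[yv yF] ->.
  have [pv|pv] := eqVneq (parent y) v; last by rewrite in_setU (feet_parent (foot _ yF yv pv)).
  have := spider_vertex_cases (subsetP sFS _ yF) yv.
  case/or3P => [y1|y2|/feet_parent_neq_root]; first by rewrite in_setU in_setI yF y1 orbT.
    by rewrite in_setU y2.
  by rewrite pv eqxx.
have one_short : #|F :&: legs S v 1| <= 1.
  move/dissP: (dF) => /(_ v vF); apply: leq_trans; apply/subset_leq_card/subsetP => y.
  by rewrite in_setI inE => /andP[-> /legs_kid/kids_adj ->].
have : #|F :\ v| <= #|legs S v 2| + #|F :&: legs S v 1|.
  rewrite -(card_in_imset inj); apply: leq_trans (subset_leq_card img) _.
  exact: (leq_card_setU _ _).1.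
have : #|F :&: legs S v 1| <= #|legs S v 1| by apply/subset_leq_card/subsetIr.
by rewrite (cardsD1 v F) vF /=; lia.
Qed.

Lemma witness_sub (A : {set T}) : A \subset legs S v 1 -> v |: (A :|: feet S) \subset S.
Proof.
move=> sA; rewrite subUset sub1set rS.1 subUset /=; apply/andP; split.
  by apply/subsetP => y /(subsetP sA) /legs_kid /kids_mem.
by apply/subsetP => y /feet_mem.
Qed.

Lemma spider_in_witness (A : {set T}) : A \subset legs S v 1 -> #|A| <= 1 ->
  dissociation adj (v |: (A :|: feet S)).
Proof.
move=> sA sizeA.
have sub_S := witness_sub sA.
have leaf_bound y : kids S y = set0 -> #|[set z in v |: (A :|: feet S) | adj y z]| <= 1.
  move=> leaf_y; rewrite -(cards1 (parent y)); apply: subset_leq_card.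
  by apply: subset_trans (nbrs_parent_kids y sub_S) _; rewrite leaf_y setU0.
apply/dissP => y; rewrite !in_setU1 in_setU => /or3P[/eqP ->|yA|yF]; last 2 first.
- by apply: leaf_bound; exact: (spider_leg1 (subsetP sA _ yA)).2.
- exact: leaf_bound (feet_leaf yF).
apply: leq_trans sizeA; apply/subset_leq_card/subsetP => z.
rewrite in_set in_setU1 in_setU => /andP[/or3P[/eqP ->|//|zF] vz].
  by rewrite adj_irr in vz.
case: (nbr_parent_or_kid (feet_mem zF) vz) => [zE|zv].
  by rewrite zE parent_root adj_irr in vz.
by move: (feet_parent_neq_root zF); rewrite (kids_parent zv) eqxx.
Qed.

Lemma spider_dnum_in : dnum_in S = (#|legs S v 2| + minn 1 #|legs S v 1|).+1.
Proof.
apply/eqP; rewrite eqn_leq; apply/andP; split.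
  by apply: dnum_le => F; exact: spider_dnum_in_le.
have [A [sA sizeA minA]] : exists A : {set T},
    [/\ A \subset legs S v 1, #|A| <= 1 & #|A| = minn 1 #|legs S v 1|].
  have [empty|[w w1]] := set_0Vmem (legs S v 1).
    by exists set0; rewrite sub0set cards0 empty cards0.
  exists [set w]; rewrite sub1set w1 cards1; split => //.
  by apply/esym/minn_idPl; apply/card_gt0P; exists w.
have vA : v \notin A :|: feet S.
  rewrite in_setU negb_or; apply/andP; split; apply/negP.
    by move/(subsetP sA)/legs_kid/kids_neq_root; rewrite eqxx.
  by move/feet_neq_root; rewrite eqxx.
have AF : [disjoint A & feet S].
  apply/pred0P => y /=; apply/negbTE/negP.
  move=> /andP[/(subsetP sA)/legs_parent pv /feet_parent_neq_root].
  by rewrite pv eqxx.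
apply: leq_trans (dnum_ge (F := v |: (A :|: feet S)) _ (spider_in_witness sA sizeA) _).
- by rewrite cardsU1 vA cardsU_disjoint // card_feet minA addnC.
- exact: witness_sub sA.
- exact: setU11.
Qed.

End RootSpider.

Lemma hanging_path_nonbranch S w : rooted S -> w != v ->
  (forall y, y \in subtree S w -> ~~ branch adj S y) -> hanging_path S w.
Proof.
move=> rS wv nonbranch y yw; apply: nonbranch_kids rS (subtree_mem yw) _ (nonbranch y yw).
by apply: contraNneq (root_notin_subtree S wv) => <-.
Qed.

(* The pruning step acts at a deepest branch vertex u != v, so every child of
   u starts a hanging path. *)
Lemma deepest_branch_paths S u : rooted S -> u \in S ->
  (forall u' n n', branch adj S u' -> u' != v -> is_dist adj S v u n ->
     is_dist adj S v u' n' -> n' <= n) ->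
  forall w, w \in kids S u -> hanging_path S w.
Proof.
move=> rS uS deepest w wu; apply: (hanging_path_nonbranch rS (kids_neq_root wu)) => y yw.
apply/negP => branch_y.
have yv : y != v by apply: contraNneq (root_notin_subtree S (kids_neq_root wu)) => <-.
have := deepest y _ _ branch_y yv (is_dist_depth rS uS) (is_dist_depth rS (subtree_mem yw)).
have := ancestor_depth_le (subtree_ancestor yw); rewrite (kids_depth wu); lia.
Qed.

(* After reducing the legs below u, D[u] is a
   spider that is not dissociation although it is without u, so it can be
   removed. *)
Lemma prune_cut_gap S u : rooted S -> u \in S -> u != v ->
  (forall w, w \in kids S u -> hanging_path S w) ->
  (1 <= #|childrenmod adj v S u 2|) || (2 <= #|childrenmod adj v S u 1|) ->
  same_gap S (S :\: subtree S u).
Proof.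
move=> rS uS uv paths big_legs.
pose R := reduce_legs S u.
have rR : rooted R := reduce_legs_rooted rS paths.
have uR : u \in R := reduce_legs_root rS uS paths.
have spR : spider R u := reduce_legs_spider rS uS paths.
apply: same_gap_trans (reduce_legs_gap rS paths) _.
rewrite -(reduce_legs_outside rS paths).
apply: (same_gap_remove adj_sym rR.1 (subtree_subset R u) _ _ (root_notin_subtree R uv)).
  exact: subtree_attached.
apply: avoidable_crit (subtree_self uR) (spider_diss_minus_centre rR spR) _.
apply: (spider_not_diss rR uR spR).
rewrite !childrenmod_eq // -!(reduce_legs_legs rS paths) // in big_legs.
case/orP: big_legs => [->//|two1]; apply/orP; right.
by apply: leq_trans two1 (subset_leq_card _); apply/subsetP => w /legs_kid.
Qed.

Lemma trim_mod0 S u z w : rooted S ->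
  ~~ ((1 <= #|childrenmod adj v S u 2|) || (2 <= #|childrenmod adj v S u 1|)) ->
  (#|childrenmod adj v S u 1| = 1 -> z \in childrenmod adj v S u 1) ->
  w \in kids S u -> w != z -> #|subtree S w| %% 3 = 0.
Proof.
move=> rS; rewrite !childrenmod_eq // negb_or -!ltnNge ltnS leqn0 cards_eq0.
set C1 := [set w0 in kids S u | _ == 1]; set C2 := [set w0 in kids S u | _ == 2].
case/andP => /eqP no2 le1 z1 wu wz.
have : #|subtree S w| %% 3 < 3 by apply: ltn_pmod.
case mod_w: (#|subtree S w| %% 3) => [//|[|[|//]]] _.
  have w1 : w \in C1 by rewrite in_set wu mod_w.
  have one : #|C1| = 1 by apply/eqP; rewrite eqn_leq -ltnS le1; apply/card_gt0P; exists w.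
  have : 1 < #|C1| by apply/card_gt1P; exists w, z; split => //; exact: z1.
  by rewrite one.
have : w \in C2 by rewrite in_set wu mod_w.
by rewrite no2 inE.
Qed.

(* Second kind of pruning step: delete D[w] for all children w != z of u;
   each of them is a hanging path with a multiple of 3 vertices. *)
Lemma prune_trim_gap S u z : rooted S ->
  (forall w, w \in kids S u -> hanging_path S w) ->
  (forall w, w \in kids S u -> w != z -> #|subtree S w| %% 3 = 0) ->
  same_gap S (S :\: \bigcup_(w in kids S u :\ z) subtree S w).
Proof.
move=> rS paths mod0.
apply: (same_gap_remove_all adj_sym (r := id) rS.1) => [w|w1 w2].
  rewrite in_setD1 => /andP[wz wu]; split.
  - exact: subtree_subset.
  - exact: subtree_attached.
  - have size_w : 0 < #|subtree S w|.
      by apply/card_gt0P; exists w; exact: subtree_self (kids_mem wu).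
    apply: (hanging_path_avoidable (k := (#|subtree S w| %/ 3).-1) rS (kids_mem wu)).
      exact: paths.
    by move: (mod0 w wu wz) size_w; lia.
  - exact: root_notin_subtree (kids_neq_root wu).
rewrite !in_setD1 => /andP[_ w1u] /andP[_ w2u]; exact: subtree_kids_disjoint w1u w2u.
Qed.

Lemma prune_step_gap S S' : rooted S -> prune_step adj v S S' -> rooted S' /\ same_gap S S'.
Proof.
move=> rS [u [branch_u uv deepest step]]; have uS : u \in S by case/andP: branch_u.
have paths := deepest_branch_paths rS uS deepest.
case: ifP step => [big_legs ->|small_legs [z zu [z1 ->]]].
  rewrite desc_eq //; split; last exact: prune_cut_gap.
  by apply: rooted_setD rS (root_notin_subtree S uv) _ => y yS; exact: subtree_parent_closed.
have -> : \bigcup_(w in children adj v S u :\ z) desc adj v S w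
        = \bigcup_(w in kids S u :\ z) subtree S w.
  by rewrite children_eq //; apply: eq_bigr => w _; rewrite desc_eq.
rewrite children_eq // in zu; split; last first.
  by apply: (prune_trim_gap rS paths) => w; apply: trim_mod0 rS (negbT small_legs) z1.
apply: rooted_setD rS _ _.
  apply/negP => /bigcupP[w]; rewrite in_setD1 => /andP[_ /kids_neq_root wv].
  by apply/negP; exact: root_notin_subtree.
by move=> y yS /bigcupP[w wu pyw]; apply/bigcupP; exists w => //; exact: subtree_parent_closed.
Qed.

Lemma prune_reach_gap S0 S : prune_reach adj v S0 S -> rooted S0 -> rooted S /\ same_gap S0 S.
Proof.
elim => [|S1 S2 _ IH step] r0; first by split => //; exact: same_gap_refl.
have [r1 gap1] := IH r0; have [r2 gap2] := prune_step_gap r1 step.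
by split => //; exact: same_gap_trans gap1 gap2.
Qed.

Lemma pruning_spider Sbar : is_pruning adj v Sbar ->
  exists S, [/\ rooted S, spider S v, same_gap [set: T] S &
    forall k, k != 0 -> #|childrenmod adj v Sbar v k| = #|legs S v k|].
Proof.
move=> [reach nonbranch].
have rT : rooted [set: T] by split => [|x _]; rewrite inE.
have [rS gapS] := prune_reach_gap reach rT.
have paths w : w \in kids Sbar v -> hanging_path Sbar w.
  move=> wv; apply: (hanging_path_nonbranch rS (kids_neq_root wv)) => y yw.
  apply: nonbranch (subtree_mem yw) _.
  by apply: contraNneq (root_notin_subtree Sbar (kids_neq_root wv)) => <-.
exists (reduce_legs Sbar v); split.
- exact: reduce_legs_rooted rS paths.
- exact: reduce_legs_spider rS rS.1 paths.
- exact: same_gap_trans gapS (reduce_legs_gap rS paths).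
- by move=> k k0; rewrite (reduce_legs_legs rS paths k0) childrenmod_eq.
Qed.

End RootedTree.

Unset Implicit Arguments.

(* Theorem 3.1.  Up to a common constant, in(T) = 1 + |C^2| + min(1, |C^1|) and
   out(T) = |C^1| + 2 |C^2|; comparing them gives both equivalences. *)
Theorem theorem3p1 (T : finType) (adj : rel T) (v : T) (Sbar : {set T}) :
  simple_graph adj -> is_tree adj ->
  is_pruning adj v Sbar ->
  (in_all_max adj v <->
     #|childrenmod adj v Sbar v 2| = 0 /\ #|childrenmod adj v Sbar v 1| <= 1) /\
  (in_no_max adj v <->
     #|childrenmod adj v Sbar v 2| = 2 \/
     3 <= #|childrenmod adj v Sbar v 1| + #|childrenmod adj v Sbar v 2|).
Proof.
move=> [adj_sym adj_irr] [_ connected acyclic] pruned.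
have [S [rS spS [c [gap_in gap_out]] counts]] :=
  pruning_spider adj_sym adj_irr connected acyclic pruned.
rewrite all_max_iff no_max_iff gap_in gap_out !counts //.
rewrite (spider_dnum_in adj_sym adj_irr connected acyclic rS spS).
rewrite (spider_dnum_out adj_sym adj_irr connected acyclic rS spS).
by split; split; lia.
Qed.
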